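(* Consider the P-SSD algorithm described in the context, executed over a time-varying digraph $\{G_k=(\{1,\dots,M\},E_k)\}_{k=1}^\infty$ that is repeatedly jointly strongly connected, and let $C_{\mathrm{SSD}}=\mathrm{SSD}(D(X),D(Y))$. Then there exists $l\in\mathbb{N}$ such that for every iteration $k\ge l$, $C_k^i=C_l^i$ for all $i\in\{1,\dots,M\}$, and $$\mathcal{R}(C_l^1)=\mathcal{R}(C_l^2)=\cdots=\mathcal{R}(C_l^M)=\mathcal{R}(C_{\mathrm{SSD}}).$$
   Context: Data setting: a map $T:\mathcal{M}\to\mathcal{M}$, $\mathcal{M}\subseteq\mathbb{R}^n$; a dictionary $D(x)=[d_1(x),\dots,d_{N_d}(x)]$ of real-valued functions on $\mathcal{M}$; data matrices $X,Y\in\mathbb{R}^{N\times n}$ whose $i$-th rows $x_i^T,y_i^T$ satisfy $y_i=T(x_i)$; $D(X)\in\mathbb{R}^{N\times N_d}$ is the matrix with rows $D(x_1),\dots,D(x_N)$ (similarly $D(Y)$). Assumption: $D(X)$ and $D(Y)$ have full column rank. There are $M$ agents; agent $i$ holds local dictionary snapshots $D(X_i),D(Y_i)$ (obtained from a subset of the snapshot pairs) such that the union over $i$ of the rows of $[D(X_i),D(Y_i)]$ equals the set of rows of $[D(X),D(Y)]$. There are signature matrices $D(X_s),D(Y_s)$ with full column rank such that the rows of $[D(X_s),D(Y_s)]$ are contained in the rows of $[D(X_i),D(Y_i)]$ for every $i$. SSD algorithm: given $A,B\in\mathbb{R}^{m\times q}$, set $A_1=A$, $B_1=B$, $C=I_q$,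 and iterate: let $[Z^A_j;Z^B_j]$ be a matrix whose columns form a basis of the null space of $[A_j,B_j]$ (with $Z^A_j$ having as many rows as $A_j$ has columns); if the null space is trivial return $0$; if the number of rows of $Z^A_j$ is at most its number of columns, return $C$; otherwise set $C\leftarrow CZ^A_j$, $A_{j+1}=A_jZ^A_j$, $B_{j+1}=B_jZ^A_j$. Its output is denoted $\mathrm{SSD}(A,B)$. P-SSD algorithm: at iteration $k\ge1$ the digraph $G_k$ is used; an edge $(j,i)\in E_k$ means $j$ is an in-neighbor of $i$, and $\mathcal{N}_{\mathrm{in}}^k(i)$ denotes the in-neighbors of $i$ in $G_k$. Each agent $i$ sets $C_0^i=I_{N_d}$, $\mathrm{flag}_0^i=0$, and for $k=1,2,\dots$: receives $C_{k-1}^j$ for $j\in\mathcal{N}_{\mathrm{in}}^k(i)$; sets $D_k^i=\mathrm{basis}\big(\bigcap_{j\in\{i\}\cup\mathcal{N}_{\mathrm{in}}^k(i)}\mathcal{R}(C_{k-1}^j)\big)$; sets $E_k^i=\mathrm{SSD}(D(X_i)D_k^i,D(Y_i)D_k^i)$; if the number of columns of $D_k^iE_k^i$ is strictly less than that of $C_{k-1}^i$, sets $C_k^i=D_k^iE_k^i$ and $\mathrm{flag}_k^i=0$; otherwise sets $C_k^i=C_{k-1}^i$ and $\mathrm{flag}_k^i=1$; then transmits $C_k^i$ to its out-neighbors. Here $\mathrm{basis}(\mathcal{A})$ returns a matrix whose columns form a basis of the subspace $\mathcal{A}$, and returns $0$ if $\mathcal{A}=\{0\}$; the matrix $0$ is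 regarded as having $0$ columns. $\mathcal{R}(\cdot)$ denotes range space. Graph notions: the composition of digraphs $G_1=(V,E_1)$, $G_2=(V,E_2)$ is $G_2\circ G_1=(V,E_\circ)$ with $E_\circ=\{(i,j):\exists k\in V,\ (i,k)\in E_1,\ (k,j)\in E_2\}$. A finite sequence $G_1,\dots,G_k$ is jointly strongly connected if $G_k\circ\cdots\circ G_1$ is strongly connected (a directed path exists from every node to every other node). A sequence $\{G_i\}_{i=1}^\infty$ is repeatedly jointly strongly connected if there exist $l,\tau\in\mathbb{N}$ such that for every $k\in\mathbb{N}_0$ the sequence $\{G_{\tau+kl+j}\}_{j=0}^{l-1}$ is jointly strongly connected. *)

From HB Require Import structures.
From mathcomp Require Import all_boot all_order all_algebra.
From mathcomp Require Import reals.
Set Implicit Arguments. Unset Strict Implicit. Unset Printing Implicit Defensive.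
Import GRing.Theory Num.Theory.
Local Open Scope ring_scope.

Definition cmx (R : Type) (n : nat) := {c : nat & 'M[R]_(n, c)}.

Definition dict_mx (R : fieldType) (n Nd N : nat) (D : 'rV[R]_n -> 'rV[R]_Nd)
  (X : 'M[R]_(N, n)) : 'M[R]_(N, Nd) := \matrix_(r < N) D (row r X).

(* The columns of Z form a basis of the subspace of column vectors whose
   transposes span the row space of V (linearly independent + spanning). *)
Definition col_basis (R : fieldType) (m p s : nat) (Z : 'M[R]_(p, s))
  (V : 'M[R]_(m, p)) : bool := row_free Z^T && (Z^T == V)%MS.

Definition range_eq (R : fieldType) (n c1 c2 : nat) (C1 : 'M[R]_(n, c1))
  (C2 : 'M[R]_(n, c2)) : bool := (C1^T == C2^T)%MS.

(* Possible runs of the SSD algorithm (for any choice of null-space bases).  The null space of [A_j, B_j]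
   is the row space of kermx (row_mx A_j B_j)^T (as transposed column vectors).
   Z^A_j = usubmx Z (the first q rows). *)
Inductive ssd_from (R : fieldType) (m q0 : nat) :
  forall q : nat, 'M[R]_(q0, q) -> 'M[R]_(m, q) -> 'M[R]_(m, q) -> cmx R q0 -> Prop :=
| SSD_trivial q (C : 'M[R]_(q0, q)) A B (Z : 'M[R]_(q + q, 0)) :
    col_basis Z (kermx (row_mx A B)^T) ->
    ssd_from C A B (existT _ 0%N (0 : 'M[R]_(q0, 0)))
| SSD_stop q (C : 'M[R]_(q0, q)) A B s (Z : 'M[R]_(q + q, s)) :
    col_basis Z (kermx (row_mx A B)^T) -> (0 < s)%N -> (q <= s)%N ->
    ssd_from C A B (existT _ q C)
| SSD_step q (C : 'M[R]_(q0, q)) A B s (Z : 'M[R]_(q + q, s)) res :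
    col_basis Z (kermx (row_mx A B)^T) -> (0 < s)%N -> (s < q)%N ->
    ssd_from (C *m usubmx Z) (A *m usubmx Z) (B *m usubmx Z) res ->
    ssd_from C A B res.

Definition ssd (R : fieldType) (m q : nat) (A B : 'M[R]_(m, q)) (res : cmx R q) : Prop :=
  ssd_from (1%:M : 'M[R]_q) A B res.

(* Possible executions of P-SSD: C k i = C_k^i.  E k j i means (j,i) in E_k,
   i.e. j is an in-neighbor of i at iteration k (k >= 1). *)
Definition pssd_run (R : fieldType) (M Nd : nat) (Nloc : 'I_M -> nat)
  (DXl DYl : forall i : 'I_M, 'M[R]_(Nloc i, Nd)) (E : nat -> rel 'I_M)
  (C : nat -> 'I_M -> cmx R Nd) : Prop :=
  (forall i, C 0%N i = existT _ Nd (1%:M : 'M[R]_Nd)) /\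
  forall (k : nat) (i : 'I_M),
    exists (d : nat) (Dm : 'M[R]_(Nd, d)) (e : nat) (Em : 'M[R]_(d, e)),
      [/\ col_basis Dm (\bigcap_(j | (j == i) || E k.+1 j i) <<(projT2 (C k j))^T>>)%MS,
          ssd (DXl i *m Dm) (DYl i *m Dm) (existT _ e Em) &
          C k.+1 i = if (e < projT1 (C k i))%N then existT _ e (Dm *m Em) else C k i].

Definition rcomp (T : finType) (E1 E2 : rel T) : rel T :=
  fun x y => [exists z, E1 x z && E2 z y].

Fixpoint comp_seq (T : finType) (G : nat -> rel T) (a l : nat) : rel T :=
  match l with
  | 0 => fun x y => x == y
  | l'.+1 => rcomp (comp_seq G a l') (G (a + l')%N)
  end.

Definition strongly_connected (T : finType) (r : rel T) : Prop :=
  forall x y, x != y -> connect r x y.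

Definition jointly_sc (T : finType) (G : nat -> rel T) (a l : nat) : Prop :=
  strongly_connected (comp_seq G a l).

Definition rep_jointly_sc (T : finType) (G : nat -> rel T) : Prop :=
  exists l tau : nat, [/\ (0 < l)%N, (0 < tau)%N &
    forall k : nat, jointly_sc G (tau + k * l)%N l].

(* SSD (A, B) returns the largest subspace W with R (A W) = R (B W), a symmetric
   subspace, when A and B have full column rank: each iteration passes to the
   vectors of R (C) that A maps into B R (C), which loses no symmetric
   subspace, and stops once nothing is lost.  Hence every P-SSD iterate R (C_k^i)
   contains each subspace that is symmetric for all local data, in particular
   R (C_SSD).  Column counts only decrease, so the run stabilises at some l;
   from then on an edge (j, i) forces R (C_l^i) <= R (C_l^j), and a strongly
   connected window makes all R (C_l^i) equal.  This common subspace is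
   symmetric for every agent; the signature rows, shared by all agents and of
   full column rank, make it symmetric for the global data, so it is contained
   in R (C_SSD). *)

From HB Require Import structures.
From mathcomp Require Import all_boot all_order all_algebra.
From mathcomp Require Import boolp reals.
Set Implicit Arguments. Unset Strict Implicit. Unset Printing Implicit Defensive.
Import GRing.Theory Num.Theory.

Lemma nonincreasing_ev_const (f : nat -> nat) :
  (forall k, f k.+1 <= f k) -> exists l, forall k, l <= k -> f k = f l.
Proof.
move=> f_step; have f_noninc : {homo f : i j / i <= j >-> j <= i}.
  by apply: homo_leq => // y x z /[swap]; apply: leq_trans.
pose attained v := `[< exists k, f k = v >].
have attained_f0 : exists v, attained v by exists (f 0); apply/asboolP; exists 0.
case: (ex_minnP attained_f0) => _ /asboolP[l <-] f_min.
exists l => k lk; apply/eqP; rewrite eqn_leq f_noninc //=.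
by apply: f_min; apply/asboolP; exists k.
Qed.

Section Preorders.
Variables (T : finType) (r : rel T).
Hypotheses (r_refl : reflexive r) (r_trans : transitive r).

Lemma connect_sub_preorder (e : rel T) : subrel e r -> subrel (connect e) r.
Proof.
move=> e_r x y /(connect_sub (fun u v euv => connect1 (e_r u v euv))).
case/connectP=> p r_p ->; have := mem_last x p; rewrite inE.
by case/predU1P=> [-> // | /(allP (order_path_min r_trans r_p))].
Qed.

Lemma comp_seq_sub_preorder (G : nat -> rel T) a :
  (forall b, a <= b -> subrel (G b) r) -> forall L, subrel (comp_seq G a L) r.
Proof.
move=> G_r; elim=> [|L IH] x y /=; first by move/eqP->.
case/existsP=> z /andP[/IH xz /(G_r _ (leq_addr _ _)) zy].
exact: r_trans xz zy.
Qed.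

Lemma rep_jointly_sc_preorder (G : nat -> rel T) a :
  rep_jointly_sc G -> (forall b, a <= b -> subrel (G b) r) -> forall x y, r x y.
Proof.
case=> L [tau [L_gt0 _ windows]] G_r x y.
have a_le : a <= tau + a * L by rewrite -[a]add0n leq_add // leq_pmulr.
have Gwin_r b : tau + a * L <= b -> subrel (G b) r.
  by move=> le_b; apply: G_r (leq_trans a_le le_b).
have [-> // | neq_xy] := eqVneq x y.
apply: connect_sub_preorder (windows a x y neq_xy).
exact: comp_seq_sub_preorder.
Qed.

End Preorders.

Local Open Scope ring_scope.

Section RangeAlgebra.
Variable F : fieldType.

Lemma row_free_tr m n (A : 'M[F]_(m, n)) : row_free A^T = row_full A.
Proof. by rewrite /row_free /row_full mxrank_tr. Qed.

Lemma row_full_mul m n p (A : 'M[F]_(m, n)) (B : 'M[F]_(n, p)) :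
  row_full A -> row_full B -> row_full (A *m B).
Proof.
rewrite -!sub1mx => fA fB; apply: submx_trans fB _.
by rewrite -{1}[B]mul1mx submxMr.
Qed.

Lemma row_full_mulr m n p (S : 'M[F]_(m, n)) (A : 'M[F]_(n, p)) :
  row_full (S *m A) -> row_full A.
Proof. by rewrite -!col_leq_rank => /leq_trans; apply; apply: mxrankM_maxr. Qed.

Lemma submx_rank_eqmx m1 m2 n (A : 'M[F]_(m1, n)) (B : 'M[F]_(m2, n)) :
  (A <= B)%MS -> (\rank B <= \rank A)%N -> (A == B)%MS.
Proof.
move=> sAB le_BA.
by rewrite sAB -(mxrank_leqif_sup sAB).2 eqn_leq le_BA andbT mxrankS.
Qed.

Lemma mulmx_rows_row_mx m1 m2 n1 n2 (A : 'M[F]_(m1, n1)) (B : 'M[F]_(m1, n2))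
    (A' : 'M[F]_(m2, n1)) (B' : 'M[F]_(m2, n2)) :
  (forall r, exists r', row r (row_mx A B) = row r' (row_mx A' B')) ->
  exists S : 'M[F]_(m1, m2), A = S *m A' /\ B = S *m B'.
Proof.
case/fin_all_exists=> f rows_f; exists (rowsub f 1%:M); apply: eq_row_mx.
rewrite -mul_mx_row -rowsubE; apply/row_matrixP => r.
by rewrite row_rowsub rows_f.
Qed.

Definition symmetric_mx m q p (A B : 'M[F]_(m, q)) (W : 'M[F]_(q, p)) :=
  range_eq (A *m W) (B *m W).

Lemma symmetric_mxMl m m' q p (S : 'M[F]_(m', m)) (A B : 'M[F]_(m, q))
    (W : 'M[F]_(q, p)) :
  symmetric_mx A B W -> symmetric_mx (S *m A) (S *m B) W.
Proof.
case/andP=> sAB sBA.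
by rewrite /symmetric_mx /range_eq -!mulmxA !(trmx_mul S) !submxMr.
Qed.

Lemma symmetric_mx_eq_range m q p1 p2 (A B : 'M[F]_(m, q)) (W1 : 'M[F]_(q, p1))
    (W2 : 'M[F]_(q, p2)) :
  range_eq W1 W2 -> symmetric_mx A B W1 = symmetric_mx A B W2.
Proof.
by move/eqmxP=> eqW; rewrite /symmetric_mx /range_eq !trmx_mul !(eqmxMr _ eqW).
Qed.

(* On the signature rows, shared by all agents, the local factorizations
   [Al i V = Bl i V Q_i] read [As V = Bs V Q_i]; as [Bs V] has full column rank
   all [Q_i] coincide, and by coverage [A V = B V Q]. *)
Lemma symmetric_mx_glue M N Ns Nd p (Nloc : 'I_M -> nat) (A B : 'M[F]_(N, Nd))
    (Al Bl : forall i : 'I_M, 'M[F]_(Nloc i, Nd)) (As Bs : 'M[F]_(Ns, Nd))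
    (V : 'M[F]_(Nd, p)) (i0 : 'I_M) :
  (forall i r, exists r', row r (row_mx As Bs) = row r' (row_mx (Al i) (Bl i))) ->
  (forall r', exists i r, row r (row_mx (Al i) (Bl i)) = row r' (row_mx A B)) ->
  row_full A -> row_full Bs -> row_full V ->
  (forall i, symmetric_mx (Al i) (Bl i) V) -> symmetric_mx A B V.
Proof.
move=> sig_rows cover fA fBs fV sym_loc.
have /fin_all_exists[Q AlV] i : exists Q : 'M_p, Al i *m V = Bl i *m V *m Q.
  case/andP: (sym_loc i) => /submxP[P AV_BV] _; exists P^T.
  by rewrite -[Al i *m V]trmxK AV_BV trmx_mul trmxK.
have AsV i : As *m V = Bs *m V *m Q i.
  have [S [-> ->]] := mulmx_rows_row_mx (sig_rows i).
  by rewrite -!mulmxA AlV !mulmxA.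
have Q_const i : Q i = Q i0.
  by apply: (row_full_inj (row_full_mul fBs fV)); rewrite -!AsV.
have AV : A *m V = B *m V *m Q i0.
  apply/row_matrixP => r'; have [i [r]] := cover r'.
  rewrite !row_row_mx => /eq_row_mx[rowA rowB].
  by rewrite !row_mul -rowA -rowB -!row_mul AlV Q_const.
apply: submx_rank_eqmx; first by rewrite AV trmx_mul submxMl.
by rewrite !mxrank_tr (eqP (row_full_mul fA fV)) rank_leq_col.
Qed.

End RangeAlgebra.

Section SSD.
Variable F : fieldType.

Lemma col_basis_ker_row_mx m q s (A B : 'M[F]_(m, q)) (Z : 'M[F]_(q + q, s)) :
  col_basis Z (kermx (row_mx A B)^T) -> A *m usubmx Z + B *m dsubmx Z = 0.
Proof.
case/andP=> _ /andP[/sub_kermxP + _]; rewrite -trmx_mul => /(congr1 trmx).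
by rewrite trmxK trmx0 -{1}(vsubmxK Z) mul_row_col.
Qed.

Lemma col_basis_ker_usubmx_full m q s (A B : 'M[F]_(m, q)) (Z : 'M[F]_(q + q, s)) :
  row_full B -> col_basis Z (kermx (row_mx A B)^T) -> row_full (usubmx Z).
Proof.
move=> fB Zb; have AB_Z := col_basis_ker_row_mx Zb; case/andP: Zb => Z_free _.
rewrite -row_free_tr; apply/inj_row_free => v /(congr1 trmx).
rewrite trmx_mul trmxK trmx0 => ZA_v.
have ZB_v : dsubmx Z *m v^T = 0.
  apply: (row_full_inj fB); move/eqP: AB_Z; rewrite addrC addr_eq0 => /eqP.
  by rewrite mulmx0 mulmxA => ->; rewrite mulNmx -mulmxA ZA_v mulmx0 oppr0.
apply/eqP; rewrite -(mulmx_free_eq0 _ Z_free).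
have -> : v *m Z^T = (Z *m v^T)^T by rewrite trmx_mul trmxK.
by rewrite -[Z]vsubmxK mul_col_mx ZA_v ZB_v col_mx0 trmx0.
Qed.

(* Writing [W = C U] and [A0 W = B0 W P], the columns of [col_mx U (- U P)]
   lie in the null space of [row_mx (A0 C) (B0 C)]. *)
Lemma col_basis_ker_max m q0 q s p (A0 B0 : 'M[F]_(m, q0)) (C : 'M[F]_(q0, q))
    (Z : 'M[F]_(q + q, s)) (W : 'M[F]_(q0, p)) :
  col_basis Z (kermx (row_mx (A0 *m C) (B0 *m C))^T) ->
  ((A0 *m W)^T <= (B0 *m W)^T)%MS -> (W^T <= C^T)%MS ->
  (W^T <= (C *m usubmx Z)^T)%MS.
Proof.
case/andP=> _ /andP[_ ker_Z] /submxP[P AW] /submxP[U' WC].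
have W_CU : W = C *m U'^T by rewrite -[W]trmxK WC trmx_mul trmxK.
set U := U'^T in W_CU.
have ACU : A0 *m C *m U = B0 *m C *m U *m P^T.
  by rewrite -(mulmxA A0) -(mulmxA B0) -W_CU -[A0 *m W]trmxK AW trmx_mul trmxK.
set Y := col_mx U (- (U *m P^T)).
have Y_ker : (Y^T <= kermx (row_mx (A0 *m C) (B0 *m C))^T)%MS.
  apply/sub_kermxP; rewrite -trmx_mul mul_row_col mulmxN ACU -mulmxA subrr.
  by rewrite trmx0.
have /submxP[Q YZ] := submx_trans Y_ker ker_Z.
have U_ZQ : U = usubmx Z *m Q^T.
  by rewrite -(col_mxKu U (- (U *m P^T))) -/Y -[Y]trmxK YZ trmx_mul trmxK mul_usub_mx.
by rewrite W_CU U_ZQ mulmxA trmx_mul submxMl.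
Qed.

Lemma col_basis_ker_range_eq m q s (A B : 'M[F]_(m, q)) (Z : 'M[F]_(q + q, s)) :
  row_full A -> row_full B -> col_basis Z (kermx (row_mx A B)^T) -> (q <= s)%N ->
  range_eq A B.
Proof.
move=> fA fB Zb le_qs.
have fZA : row_full (usubmx Z)^T.
  by rewrite -col_leq_rank mxrank_tr (eqP (col_basis_ker_usubmx_full fB Zb)).
apply: submx_rank_eqmx; last by rewrite !mxrank_tr (eqP fA) (eqP fB).
rewrite -(eqmxMfull _ fZA) -trmx_mul.
move/eqP: (col_basis_ker_row_mx Zb); rewrite addr_eq0 => /eqP->.
by rewrite -mulmxN trmx_mul submxMl.
Qed.

Lemma ssd_from_correct m q0 (A0 B0 : 'M[F]_(m, q0)) q (C : 'M[F]_(q0, q)) A B res :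
  row_full A0 -> row_full B0 -> ssd_from C A B res ->
  A = A0 *m C -> B = B0 *m C -> row_full C ->
  [/\ ((projT2 res)^T <= C^T)%MS, row_full (projT2 res),
      symmetric_mx A0 B0 (projT2 res) &
      forall p (W : 'M[F]_(q0, p)), symmetric_mx A0 B0 W -> (W^T <= C^T)%MS ->
        (W^T <= (projT2 res)^T)%MS].
Proof.
move=> fA0 fB0; elim=> {q C A B res} q C A B.
- move=> Z Zb eA eB fC; subst A B; split.
  + by rewrite trmx0 sub0mx.
  + by rewrite /row_full mxrank0.
  + by rewrite /symmetric_mx !mulmx0; apply/eqmxP.
  + move=> p W /andP[sW _] sWC; have := col_basis_ker_max Zb sW sWC.
    by rewrite (thinmx0 (C *m usubmx Z)) !trmx0.
- move=> s Z Zb _ le_qs eA eB fC; subst A B; split => //.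
  exact: col_basis_ker_range_eq (row_full_mul fA0 fC) (row_full_mul fB0 fC) Zb le_qs.
- move=> s Z res Zb _ _ _ IH eA eB fC; subst A B.
  have fZA := col_basis_ker_usubmx_full (row_full_mul fB0 fC) Zb.
  have [sub_res fres sym_res max_res] :=
    IH (esym (mulmxA _ _ _)) (esym (mulmxA _ _ _)) (row_full_mul fC fZA).
  split => //; first by apply: submx_trans sub_res _; rewrite trmx_mul submxMl.
  move=> p W symW sWC; apply: (max_res _ _ symW).
  by case/andP: symW => sW _; apply: col_basis_ker_max Zb sW sWC.
Qed.

Lemma ssd_correct m q (A B : 'M[F]_(m, q)) res :
  row_full A -> row_full B -> ssd A B res ->
  [/\ row_full (projT2 res), symmetric_mx A B (projT2 res) &
      forall p (W : 'M[F]_(q, p)), symmetric_mx A B W -> (W^T <= (projT2 res)^T)%MS].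
Proof.
move=> fA fB ssdAB.
have f1 : row_full (1%:M : 'M[F]_q) by rewrite /row_full mxrank1.
have [_ fres sym_res max_res] :=
  ssd_from_correct fA fB ssdAB (esym (mulmx1 A)) (esym (mulmx1 B)) f1.
by split => // p W symW; apply: max_res symW _; rewrite trmx1 submx1.
Qed.

End SSD.

Section PSSD.
Variables (F : fieldType) (M Nd : nat) (Nloc : 'I_M -> nat).
Variables (DXl DYl : forall i : 'I_M, 'M[F]_(Nloc i, Nd)).
Variables (E : nat -> rel 'I_M) (C : nat -> 'I_M -> cmx F Nd).
Hypothesis run : pssd_run DXl DYl E C.

Lemma pssd_keep_or_shrink k i :
  C k.+1 i = C k i \/ (projT1 (C k.+1 i) < projT1 (C k i))%N.
Proof. by have [d [Dm [e [Em [_ _ ->]]]]] := run.2 k i; case: ifP; [right | left]. Qed.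

Lemma pssd_stabilizes : exists l, forall k, (l <= k)%N -> forall i, C k i = C l i.
Proof.
have cols_step i k : (projT1 (C k.+1 i) <= projT1 (C k i))%N.
  by case: (pssd_keep_or_shrink k i) => [-> | /ltnW].
have /fin_all_exists[L cols_const] i :
    exists L, forall k, (L <= k)%N -> projT1 (C k i) = projT1 (C L i).
  exact: nonincreasing_ev_const (cols_step i).
exists (\max_i L i).
have keep k i : (\max_i L i <= k)%N -> C k.+1 i = C k i.
  move=> le_k; have le_Lk := leq_trans (leq_bigmax i) le_k.
  case: (pssd_keep_or_shrink k i) => //.
  by rewrite (cols_const i k.+1) ?(leqW le_Lk) // (cols_const i k) // ltnn.
elim=> [|k IH]; first by rewrite leqn0 => /eqP->.
by rewrite leq_eqVlt => /predU1P[-> // | le_k i]; rewrite keep // IH.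
Qed.

Hypotheses (fX : forall i, row_full (DXl i)) (fY : forall i, row_full (DYl i)).

Lemma pssd_step_ssd k i : exists d (Dm : 'M[F]_(Nd, d)) e (Em : 'M[F]_(d, e)),
  [/\ (Dm^T == \bigcap_(j | (j == i) || E k.+1 j i) <<(projT2 (C k j))^T>>)%MS,
      row_full (Dm *m Em), symmetric_mx (DXl i) (DYl i) (Dm *m Em),
      forall p (W : 'M[F]_(Nd, p)), symmetric_mx (DXl i) (DYl i) W ->
        (W^T <= Dm^T)%MS -> (W^T <= (Dm *m Em)^T)%MS &
      C k.+1 i = if (e < projT1 (C k i))%N then existT _ e (Dm *m Em) else C k i].
Proof.
have [d [Dm [e [Em [/andP[fD eqD] ssd_loc ->]]]]] := run.2 k i.
rewrite row_free_tr in fD.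
have [fE symE maxE] :=
  ssd_correct (row_full_mul (fX i) fD) (row_full_mul (fY i) fD) ssd_loc.
exists d, Dm, e, Em; split => //.
- exact: row_full_mul.
- by rewrite /symmetric_mx !mulmxA.
- move=> p W symW /submxP[P WD].
  have W_DP : W = Dm *m P^T by rewrite -[W]trmxK WD trmx_mul trmxK.
  have /maxE : symmetric_mx (DXl i *m Dm) (DYl i *m Dm) P^T.
    by rewrite /symmetric_mx -!mulmxA -W_DP.
  by rewrite trmxK WD trmx_mul => /submxMr->.
Qed.

Lemma pssd_row_full k i : row_full (projT2 (C k i)).
Proof.
elim: k i => [|k IH] i; first by rewrite run.1 /row_full mxrank1.
by have [d [Dm [e [Em [_ fDE _ _ ->]]]]] := pssd_step_ssd k i; case: ifP.
Qed.

(* When [C k.+1 i = C k i], the range is still that of [Dm *m Em]: the latter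
   lies in [R (C k i)] and has at least as many independent columns. *)
Lemma pssd_step_range k i : exists d (Dm : 'M[F]_(Nd, d)) e (Em : 'M[F]_(d, e)),
  [/\ (Dm^T == \bigcap_(j | (j == i) || E k.+1 j i) <<(projT2 (C k j))^T>>)%MS,
      range_eq (projT2 (C k.+1 i)) (Dm *m Em),
      symmetric_mx (DXl i) (DYl i) (Dm *m Em) &
      forall p (W : 'M[F]_(Nd, p)), symmetric_mx (DXl i) (DYl i) W ->
        (W^T <= Dm^T)%MS -> (W^T <= (Dm *m Em)^T)%MS].
Proof.
have [d [Dm [e [Em [eqD fDE symDE maxDE ->]]]]] := pssd_step_ssd k i.
exists d, Dm, e, Em; split => //; rewrite /range_eq; case: ifP => [_ | le_e] /=.
  by rewrite submx_refl.
have DE_sub : ((Dm *m Em)^T <= (projT2 (C k i))^T)%MS.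
  rewrite trmx_mul; apply: submx_trans (submxMl _ _) _.
  case/andP: eqD => /submx_trans -> //.
  by apply: (bigcapmx_inf i); rewrite ?eqxx ?genmxE.
rewrite andbC; apply: submx_rank_eqmx => //.
by rewrite !mxrank_tr (eqP fDE) (leq_trans (rank_leq_col _)) // leqNgt le_e.
Qed.

Lemma pssd_symmetric k i : symmetric_mx (DXl i) (DYl i) (projT2 (C k.+1 i)).
Proof.
have [d [Dm [e [Em [_ eqC symDE _]]]]] := pssd_step_range k i.
by rewrite (symmetric_mx_eq_range _ _ eqC).
Qed.

Lemma pssd_sub_in_neighbor k i j : (j == i) || E k.+1 j i ->
  ((projT2 (C k.+1 i))^T <= (projT2 (C k j))^T)%MS.
Proof.
move=> j_in; have [d [Dm [e [Em [/andP[sD _] /andP[sC _] _ _]]]]] := pssd_step_range k i.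
apply: submx_trans sC _; rewrite trmx_mul; apply: submx_trans (submxMl _ _) _.
by apply: submx_trans sD _; apply: (bigcapmx_inf j); rewrite ?genmxE.
Qed.

Lemma pssd_symmetric_sub p (W : 'M[F]_(Nd, p)) :
  (forall i, symmetric_mx (DXl i) (DYl i) W) ->
  forall k i, (W^T <= (projT2 (C k i))^T)%MS.
Proof.
move=> symW; elim=> [|k IH] i; first by rewrite run.1 trmx1 submx1.
have [d [Dm [e [Em [/andP[_ sD] /andP[_ sC] _ maxDE]]]]] := pssd_step_range k i.
apply: submx_trans sC; apply: maxDE => //; apply: submx_trans sD.
by apply/sub_bigcapmxP => j _; rewrite genmxE.
Qed.

Lemma pssd_stable_range_eq l : rep_jointly_sc E ->
  (forall k, (l <= k)%N -> forall i, C k i = C l i) ->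
  forall i j, range_eq (projT2 (C l i)) (projT2 (C l j)).
Proof.
move=> rep stable.
pose sup_rel := [rel x y | (projT2 (C l y))^T <= (projT2 (C l x))^T]%MS.
have edge_sup b : (l < b)%N -> subrel (E b) sup_rel.
  case: b => // k le_lk x y Exy /=.
  rewrite -(stable k.+1 (leqW le_lk)) -(stable k le_lk).
  by apply: pssd_sub_in_neighbor; rewrite Exy orbT.
have sup_refl : reflexive sup_rel by move=> x; apply: submx_refl.
have sup_trans : transitive sup_rel by move=> y x z /= yx zy; apply: submx_trans zy yx.
have all_sup := rep_jointly_sc_preorder sup_refl sup_trans rep edge_sup.
by move=> i j; apply/andP; split; [apply: all_sup j i | apply: all_sup i j].
Qed.

End PSSD.

Theorem theorem6p1 (R : realType) (n Nd N M : nat)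
  (T : 'rV[R]_n -> 'rV[R]_n) (D : 'rV[R]_n -> 'rV[R]_Nd)
  (X Y : 'M[R]_(N, n))
  (Nloc : 'I_M -> nat) (Xl Yl : forall i : 'I_M, 'M[R]_(Nloc i, n))
  (Ns : nat) (Xs Ys : 'M[R]_(Ns, n))
  (E : nat -> rel 'I_M) (C : nat -> 'I_M -> cmx R Nd) :
  (forall r : 'I_N, row r Y = T (row r X)) ->
  row_full (dict_mx D X) -> row_full (dict_mx D Y) ->
  (forall (i : 'I_M) (r : 'I_(Nloc i)), exists r' : 'I_N,
      row r (Xl i) = row r' X /\ row r (Yl i) = row r' Y) ->
  (forall r' : 'I_N, exists (i : 'I_M) (r : 'I_(Nloc i)),
      row r (row_mx (dict_mx D (Xl i)) (dict_mx D (Yl i)))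
      = row r' (row_mx (dict_mx D X) (dict_mx D Y))) ->
  row_full (dict_mx D Xs) -> row_full (dict_mx D Ys) ->
  (forall (i : 'I_M) (r : 'I_Ns), exists r' : 'I_(Nloc i),
      row r (row_mx (dict_mx D Xs) (dict_mx D Ys))
      = row r' (row_mx (dict_mx D (Xl i)) (dict_mx D (Yl i)))) ->
  rep_jointly_sc E ->
  pssd_run (fun i => dict_mx D (Xl i)) (fun i => dict_mx D (Yl i)) E C ->
  exists l : nat,
    (forall k : nat, (l <= k)%N -> forall i : 'I_M, C k i = C l i) /\
    (forall Cssd : cmx R Nd, ssd (dict_mx D X) (dict_mx D Y) Cssd ->
       forall i : 'I_M, range_eq (projT2 (C l i)) (projT2 Cssd)).
Proof.
move=> _ fX fY loc_rows cover fXs fYs sig_rows rep run.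
have loc_restrict i : exists S,
    dict_mx D (Xl i) = S *m dict_mx D X /\ dict_mx D (Yl i) = S *m dict_mx D Y.
  apply: mulmx_rows_row_mx => r; have [r' [rowX rowY]] := loc_rows i r.
  by exists r'; rewrite !row_row_mx !rowK rowX rowY.
have fXl i : row_full (dict_mx D (Xl i)).
  have [S [sigX _]] := mulmx_rows_row_mx (sig_rows i).
  by rewrite sigX in fXs; apply: row_full_mulr fXs.
have fYl i : row_full (dict_mx D (Yl i)).
  have [S [_ sigY]] := mulmx_rows_row_mx (sig_rows i).
  by rewrite sigY in fYs; apply: row_full_mulr fYs.
have [l stable] := pssd_stabilizes run.
exists l; split => // Cssd ssdXY i.
have [_ sym_ssd max_ssd] := ssd_correct fX fY ssdXY.
have ssd_sub : ((projT2 Cssd)^T <= (projT2 (C l i))^T)%MS.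
  apply: (pssd_symmetric_sub run fXl fYl) => j.
  by have [S [-> ->]] := loc_restrict j; apply: symmetric_mxMl sym_ssd.
have sym_loc j : symmetric_mx (dict_mx D (Xl j)) (dict_mx D (Yl j)) (projT2 (C l i)).
  rewrite (symmetric_mx_eq_range _ _ (pssd_stable_range_eq run fXl fYl rep stable i j)).
  by rewrite -(stable l.+1 (leqnSn l) j); apply: (pssd_symmetric run fXl fYl).
have sym_glob : symmetric_mx (dict_mx D X) (dict_mx D Y) (projT2 (C l i)).
  exact: symmetric_mx_glue sig_rows cover fX fYs (pssd_row_full run fXl fYl l i) sym_loc.
by rewrite /range_eq max_ssd // ssd_sub.
Qed.
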